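(* Let $\mathcal{G}$ be the game with players $\mathcal{N}=\{1,\dots,N\}$, where player $n$ chooses $d_n^{\mathrm{gen}}\ge 0$ and has utility $$U_n(d_n^{\mathrm{gen}},\boldsymbol d_{-n}^{\mathrm{gen}})=r_n+P_n-R_n-C_n-C_0,$$ with all quantities as defined in the context, and assume $z_n:=\sum_{n'\in\mathcal N}\gamma_{n,n'}(\xi-\phi_{n'})-\psi_n<0$ for every $n$. Define $$F(\boldsymbol d^{\mathrm{gen}})=\epsilon(\boldsymbol d^{\mathrm{gen}})-\sum_{n\in\mathcal N}\frac{\kappa_n C_n^{\mathrm{cmp}}(\eta_n+\mu_n)\,d_n^{\mathrm{gen}} f_n^2}{z_n}.$$ Then $\mathcal{G}$ is a weighted potential game with potential function $F$: for every $n\in\mathcal N$, every $\boldsymbol d_{-n}^{\mathrm{gen}}$ and every $d_n^{\mathrm{gen}},d_n'^{\,\mathrm{gen}}$, $$U_n(d_n^{\mathrm{gen}},\boldsymbol d_{-n}^{\mathrm{gen}})-U_n(d_n'^{\,\mathrm{gen}},\boldsymbol d_{-n}^{\mathrm{gen}})=z_n\big[F(d_n^{\mathrm{gen}},\boldsymbol d_{-n}^{\mathrm{gen}})-F(d_n'^{\,\mathrm{gen}},\boldsymbol d_{-n}^{\mathrm{gen}})\big].$$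
   Context: Model (one training round of cross-silo federated learning with $N$ competing organizations). Each organization $n$ has fixed local data size $d_n^{\mathrm{loc}}>0$ and chooses an amount $d_n^{\mathrm{gen}}$ of synthetic data; $\boldsymbol d^{\mathrm{gen}}=(d_1^{\mathrm{gen}},\dots,d_N^{\mathrm{gen}})$ and $\boldsymbol d_{-n}^{\mathrm{gen}}$ denotes the profile of all players except $n$. Constants: $\alpha>0,\beta>0,\delta\ge 0,\varrho>0$, $\epsilon_0$; for each $n$: $\psi_n\ge0$, $\phi_n\ge 0$, $\kappa_n>0$, $C_n^{\mathrm{cmp}}>0$, $\eta_n>0$, $\mu_n>0$, $f_n>0$; $C_0\ge 0$; $\xi\ge 0$; competitive intensities $\gamma_{n,n'}\in[0,1]$. Define the local error $\epsilon_n=\alpha(d_n^{\mathrm{loc}}+d_n^{\mathrm{gen}})^{-\beta}-\delta$ and the global error $\epsilon(\boldsymbol d^{\mathrm{gen}})=\exp\!\big((\tfrac1N\sum_{n}\epsilon_n-1)/\varrho\big)$. Cooperation gain $r_n=\psi_n[\epsilon_0-\epsilon(\boldsymbol d^{\mathrm{gen}})]$. The contribution gap of $n$ is $\Delta_n=\epsilon(\boldsymbol d^{\mathrm{gen}})-\bar\epsilon_{-n}(\boldsymbol d_{-n}^{\mathrm{gen}})$, where $\bar\epsilon_{-n}$ (written $\epsilon(\boldsymbol d^{\mathrm{gen}}_{-n})$ in the paper) depends only on the other players' strategies. Competition loss $R_n=\sum_{n'\in\mathcal N}\phi_{n'}\gamma_{n,n'}\Delta_n$; payoff redistribution $P_n=\sum_{n'\in\mathcal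 N}\xi\gamma_{n,n'}\Delta_n$; computational cost $C_n=C_n^{\mathrm{cmp}}\kappa_n\big(\eta_n(d_n^{\mathrm{loc}}+d_n^{\mathrm{gen}})+\mu_n d_n^{\mathrm{gen}}\big)f_n^2$; $C_0$ is a fixed server fee. *)

From mathcomp Require Import all_boot all_order all_algebra.
From mathcomp Require Import all_classical all_reals all_analysis.
Set Implicit Arguments. Unset Strict Implicit. Unset Printing Implicit Defensive.
Import Order.TTheory GRing.Theory Num.Theory.
Local Open Scope ring_scope.

Section Game.
Variable R : realType.
Variable N : nat.

Definition upd (d : 'I_N -> R) (n : 'I_N) (x : R) : 'I_N -> R :=
  fun m => if m == n then x else d m.

Definition local_err (alpha beta delta dl dg : R) : R :=
  alpha * (dl + dg) `^ (- beta) - delta.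

Definition glob_err (alpha beta delta rho : R) (dloc d : 'I_N -> R) : R :=
  expR (((N%:R)^-1 * \sum_(n < N) local_err alpha beta delta (dloc n) (d n) - 1) / rho).

Definition contrib_gap alpha beta delta rho dloc (epsm : 'I_N -> ('I_N -> R) -> R)
  (n : 'I_N) (d : 'I_N -> R) : R :=
  glob_err alpha beta delta rho dloc d - epsm n d.

Definition depends_only_on_others (epsm : 'I_N -> ('I_N -> R) -> R) : Prop :=
  forall n d d', (forall m, m != n -> d m = d' m) -> epsm n d = epsm n d'.

Definition utility (alpha beta delta rho eps0 xi C0 : R) (dloc : 'I_N -> R)
  (psi phi kappa Ccmp eta mu f : 'I_N -> R) (gamma : 'I_N -> 'I_N -> R)
  (epsm : 'I_N -> ('I_N -> R) -> R) (n : 'I_N) (d : 'I_N -> R) : R :=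
  let eps := glob_err alpha beta delta rho dloc d in
  let Dn := contrib_gap alpha beta delta rho dloc epsm n d in
  let r := psi n * (eps0 - eps) in
  let Rn := \sum_(m < N) phi m * gamma n m * Dn in
  let Pn := \sum_(m < N) xi * gamma n m * Dn in
  let Cn := Ccmp n * kappa n * (eta n * (dloc n + d n) + mu n * d n) * f n ^+ 2 in
  r + Pn - Rn - Cn - C0.

Definition zcoef (xi : R) (psi phi : 'I_N -> R) (gamma : 'I_N -> 'I_N -> R) (n : 'I_N) : R :=
  \sum_(m < N) gamma n m * (xi - phi m) - psi n.

Definition potential (alpha beta delta rho xi : R) (dloc : 'I_N -> R)
  (psi phi kappa Ccmp eta mu f : 'I_N -> R) (gamma : 'I_N -> 'I_N -> R)
  (d : 'I_N -> R) : R :=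
  glob_err alpha beta delta rho dloc d -
  \sum_(n < N) kappa n * Ccmp n * (eta n + mu n) * d n * f n ^+ 2
               / zcoef xi psi phi gamma n.

End Game.

From mathcomp Require Import all_boot all_order all_algebra.
From mathcomp Require Import all_classical all_reals all_analysis.
From mathcomp Require Import ring.

Set Implicit Arguments.
Unset Strict Implicit.
Unset Printing Implicit Defensive.
Import Order.TTheory GRing.Theory Num.Theory.
Local Open Scope ring_scope.

(* Since eps_{-n} does not depend on d_n, the utility of player n depends on
   d_n only through z_n eps(d) - w_n d_n, where w_n = kappa_n C_n (eta_n + mu_n) f_n^2
   is the marginal computational cost; the potential depends on d_n only through
   eps(d) - w_n d_n / z_n.  Multiplying the latter by z_n <> 0 gives the former.
   The identity is purely algebraic. *)

Section UpdateProfile.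
Variables (R : realType) (N : nat).

Lemma upd_same (d : 'I_N -> R) n x : upd d n x n = x.
Proof. by rewrite /upd eqxx. Qed.

Lemma upd_other (d : 'I_N -> R) n x m : m != n -> upd d n x m = d m.
Proof. by move=> /negPf mn; rewrite /upd mn. Qed.

Lemma sumr_upd_diff (g : 'I_N -> R -> R) (d : 'I_N -> R) n x x' :
  \sum_(m < N) g m (upd d n x m) - \sum_(m < N) g m (upd d n x' m) = g n x - g n x'.
Proof.
rewrite -sumrB (bigD1 n) //= big1 ?addr0 ?upd_same // => m mn.
by rewrite !upd_other ?subrr.
Qed.

Lemma depends_only_on_others_upd (epsm : 'I_N -> ('I_N -> R) -> R) :
  depends_only_on_others epsm ->
  forall d n x x', epsm n (upd d n x) = epsm n (upd d n x').
Proof. by move=> epsm_dep d n x x'; apply: epsm_dep => m mn; rewrite !upd_other. Qed.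

End UpdateProfile.

Section WeightedPotential.
Variables (R : realType) (N : nat) (alpha beta delta rho eps0 xi C0 : R).
Variables (dloc psi phi kappa Ccmp eta mu f : 'I_N -> R).
Variables (gamma : 'I_N -> 'I_N -> R) (epsm : 'I_N -> ('I_N -> R) -> R).

Local Notation eps := (glob_err alpha beta delta rho dloc).
Local Notation z := (zcoef xi psi phi gamma).
Local Notation U :=
  (utility alpha beta delta rho eps0 xi C0 dloc psi phi kappa Ccmp eta mu f gamma epsm).
Local Notation F := (potential alpha beta delta rho xi dloc psi phi kappa Ccmp eta mu f gamma).

Definition cost_slope (n : 'I_N) : R := kappa n * Ccmp n * (eta n + mu n) * f n ^+ 2.

Lemma utilityE n d :
  U n d = z n * eps d - cost_slope n * d n
          + (psi n * eps0 - (\sum_(m < N) gamma n m * (xi - phi m)) * epsm n d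
             - Ccmp n * kappa n * eta n * dloc n * f n ^+ 2 - C0).
Proof.
rewrite /utility /zcoef /contrib_gap /cost_slope.
set S := \sum_(m < N) gamma n m * (xi - phi m).
set D := eps d - epsm n d.
have -> : \sum_(m < N) xi * gamma n m * D = \sum_(m < N) phi m * gamma n m * D + S * D.
  by rewrite mulr_suml -big_split; apply: eq_bigr => m _ /=; ring.
by rewrite /D; ring.
Qed.

Hypothesis epsm_dep : depends_only_on_others epsm.

Lemma utility_upd_diff n d x x' :
  U n (upd d n x) - U n (upd d n x')
  = z n * (eps (upd d n x) - eps (upd d n x')) - cost_slope n * (x - x').
Proof.
by rewrite !utilityE (depends_only_on_others_upd epsm_dep d n x x') !upd_same; ring.
Qed.

Lemma potential_upd_diff n d x x' :
  F (upd d n x) - F (upd d n x')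
  = eps (upd d n x) - eps (upd d n x') - cost_slope n * (x - x') / z n.
Proof.
pose g m y := kappa m * Ccmp m * (eta m + mu m) * y * f m ^+ 2 / z m.
rewrite /potential opprD addrACA -opprD (sumr_upd_diff g) /g /cost_slope.
by congr (_ - _); ring.
Qed.

End WeightedPotential.

Theorem theorem1 (R : realType) (N : nat)
  (alpha beta delta rho eps0 xi C0 : R)
  (dloc psi phi kappa Ccmp eta mu f : 'I_N -> R)
  (gamma : 'I_N -> 'I_N -> R) (epsm : 'I_N -> ('I_N -> R) -> R) :
  0 < alpha -> 0 < beta -> 0 <= delta -> 0 < rho -> 0 <= C0 -> 0 <= xi ->
  (forall n, 0 < dloc n) -> (forall n, 0 <= psi n) -> (forall n, 0 <= phi n) ->
  (forall n, 0 < kappa n) -> (forall n, 0 < Ccmp n) -> (forall n, 0 < eta n) ->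
  (forall n, 0 < mu n) -> (forall n, 0 < f n) ->
  (forall n m, 0 <= gamma n m <= 1) ->
  depends_only_on_others epsm ->
  (forall n, zcoef xi psi phi gamma n < 0) ->
  forall (n : 'I_N) (d : 'I_N -> R) (x x' : R),
    (forall m, 0 <= d m) -> 0 <= x -> 0 <= x' ->
    utility alpha beta delta rho eps0 xi C0 dloc psi phi kappa Ccmp eta mu f gamma epsm
      n (upd d n x)
    - utility alpha beta delta rho eps0 xi C0 dloc psi phi kappa Ccmp eta mu f gamma epsm
      n (upd d n x')
    = zcoef xi psi phi gamma n *
      (potential alpha beta delta rho xi dloc psi phi kappa Ccmp eta mu f gamma (upd d n x)
       - potential alpha beta delta rho xi dloc psi phi kappa Ccmp eta mu f gamma (upd d n x')).
Proof.
move=> _ _ _ _ _ _ _ _ _ _ _ _ _ _ _ epsm_dep z_neg n d x x' _ _ _.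
have z_neq0 : zcoef xi psi phi gamma n != 0 by exact: ltr0_neq0 (z_neg n).
rewrite utility_upd_diff // potential_upd_diff.
by field.
Qed.
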